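(* Let $\mathbb G=V_1\times V_2$ be a step-two Carnot group and let $f\in\mathcal A_h(\mathbb G)$. Assume in addition that $f$ is $V_2$-affine, i.e. for every $(x,z)\in\mathbb G$ and $z'\in V_2$ the map $t\in\mathbb R\mapsto f(x,z+tz')$ is affine. Then there are an affine map $a\in\mathcal A(V_1\times V_2)$ and a bilinear map $b:V_1\times V_2\to\mathbb R$ such that $b(x,[x,x'])=0$ for all $x,x'\in V_1$ and $f(x,z)=a(x,z)+b(x,z)$ for all $(x,z)\in\mathbb G$.
   Context: A step-two Carnot group is $\mathbb G=V_1\times V_2$, where $V_1,V_2$ are finite-dimensional real vector spaces with $V_2\neq\{0\}$, equipped with a bilinear skew-symmetric map $[\cdot,\cdot]:V_1\times V_1\to V_2$ with $\operatorname{span}\{[x,x']:x,x'\in V_1\}=V_2$, and group law $(x,z)\cdot(x',z')=(x+x',z+z'+[x,x'])$. $\mathcal A_h(\mathbb G)$ is the space of $h$-affine maps $f:\mathbb G\to\mathbb R$, i.e. such that for all $(x,z)\in\mathbb G$, $y\in V_1$, $t\mapsto f((x,z)\cdot(ty,0))$ is affine. $\mathcal A(V_1\times V_2)$ denotes the maps affine in the usual sense on the vector space $V_1\times V_2$. *)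

From HB Require Import structures.
From mathcomp Require Import all_boot all_order all_algebra.
From mathcomp Require Import reals.
Set Implicit Arguments. Unset Strict Implicit. Unset Printing Implicit Defensive.
Import Order.TTheory GRing.Theory Num.Theory.
Local Open Scope ring_scope.

Section Defs.
Variable R : realType.

Definition lin_map (U W : lmodType R) (g : U -> W) :=
  forall (c : R) (u v : U), g (c *: u + v) = c *: g u + g v.

Definition lin_form (U : lmodType R) (g : U -> R) :=
  forall (c : R) (u v : U), g (c *: u + v) = c * g u + g v.

Definition affine_fun (g : R -> R) := exists a b : R, forall t, g t = a + b * t.

Variables V1 V2 : vectType R.

(* step-two Carnot group data: bilinear skew-symmetric bracket spanning V2, V2 <> 0 *)
Definition carnot_bracket (br : V1 -> V1 -> V2) :=
  [/\ (forall x, lin_map (br x)), (forall x', lin_map (fun x => br x x')),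
      (forall x x', br x x' = - br x' x),
      (forall z : V2, exists (n : nat) (c : 'I_n -> R) (x x' : 'I_n -> V1),
          z = \sum_(i < n) c i *: br (x i) (x' i))
    & exists z : V2, z != 0].

Definition cmul (br : V1 -> V1 -> V2) (p q : V1 * V2) : V1 * V2 :=
  (p.1 + q.1, p.2 + q.2 + br p.1 q.1).

Definition h_affine (br : V1 -> V1 -> V2) (f : V1 * V2 -> R) :=
  forall (p : V1 * V2) (y : V1), affine_fun (fun t => f (cmul br p (t *: y, 0))).

Definition V2_affine (f : V1 * V2 -> R) :=
  forall (x : V1) (z z' : V2), affine_fun (fun t => f (x, z + t *: z')).

Definition affine_map (a : V1 * V2 -> R) :=
  exists (c : R) (l : V1 * V2 -> R), lin_form l /\ forall p, a p = c + l p.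

Definition bilin_form (b : V1 -> V2 -> R) :=
  (forall x, lin_form (b x)) /\ (forall z, lin_form (fun x => b x z)).

End Defs.

From HB Require Import structures.
From mathcomp Require Import all_boot all_order all_algebra.
From mathcomp Require Import reals.
From mathcomp Require Import ring lra.

Set Implicit Arguments.
Unset Strict Implicit.
Unset Printing Implicit Defensive.
Import GRing.Theory Num.Theory.
Local Open Scope ring_scope.

(* Affinity along vertical lines makes [vpart x z = f (x, z) - f (x, 0)] linear
   in [z]; comparing [f] at heights [z] and [0] along horizontal lines shows that
   it is also affine in [x], so [f (x, z) = hpart x + vlin z + vbil x z] with
   [vlin] linear and [vbil] bilinear.  Along the horizontal line
   [t |-> (x, 0) . (t y, 0)] the function [f] equals [hpart (x + t y)] plus a
   polynomial in [t] whose [t^2]-coefficient is [vbil y [x, y]].  As [hpart] is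
   affine on lines through the origin, rescaling [x] and [y] changes the second
   differences of [hpart] and this coefficient by different factors, which
   forces [vbil y [x, y] = 0]; skew-symmetry then gives [vbil x [x, y] = 0], and
   what remains says that [hpart] is affine. *)

Section AffineFun.
Variable R : realType.
Implicit Types phi psi : R -> R.

Lemma affine_funE phi : affine_fun phi -> forall t, phi t = phi 0 + t * (phi 1 - phi 0).
Proof. by move=> [a [b phiE]] t; rewrite !phiE; ring. Qed.

Lemma affine_fun_second_difference phi : affine_fun phi -> phi 0 - 2 * phi 1 + phi 2 = 0.
Proof. by move=> /affine_funE phiE; rewrite (phiE 2); ring. Qed.

Lemma eq_affine_fun phi psi : phi =1 psi -> affine_fun phi -> affine_fun psi.
Proof. by move=> eq_phi [a [b phiE]]; exists a, b => t; rewrite -eq_phi. Qed.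

Lemma affine_funB phi psi : affine_fun phi -> affine_fun psi ->
  affine_fun (fun t => phi t - psi t).
Proof.
by move=> [a [b phiE]] [a' [b' psiE]]; exists (a - a'), (b - b') => t; rewrite phiE psiE; ring.
Qed.

Lemma affine_fun_sub_linear phi (k : R) :
  affine_fun phi -> affine_fun (fun t => phi t - t * k).
Proof. by move=> [a [b phiE]]; exists a, (b - k) => t; rewrite phiE; ring. Qed.

End AffineFun.

Section LinearMaps.
Variable R : realType.
Variables U W : lmodType R.

Lemma lin_form0 (g : U -> R) : lin_form g -> g 0 = 0.
Proof. by move=> gL; have := gL 1 0 0; rewrite scaler0 addr0 mul1r; lra. Qed.

Lemma lin_formZ (g : U -> R) : lin_form g -> forall c u, g (c *: u) = c * g u.
Proof. by move=> gL c u; have := gL c u 0; rewrite !addr0 (lin_form0 gL) addr0. Qed.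

Lemma lin_formD (g : U -> R) : lin_form g -> forall u v, g (u + v) = g u + g v.
Proof. by move=> gL u v; have := gL 1 u v; rewrite scale1r mul1r. Qed.

Lemma lin_formN (g : U -> R) : lin_form g -> forall u, g (- u) = - g u.
Proof. by move=> gL u; rewrite -scaleN1r (lin_formZ gL) mulN1r. Qed.

Lemma lin_formB (g h : U -> R) : lin_form g -> lin_form h -> lin_form (fun u => g u - h u).
Proof. by move=> gL hL c u v; rewrite gL hL; ring. Qed.

Lemma lin_map0 (g : U -> W) : lin_map g -> g 0 = 0.
Proof.
move=> gL; have := gL 1 0 0; rewrite scaler0 addr0 scale1r.
by move/(congr1 (fun w => w - g 0)); rewrite subrr addrK.
Qed.

Lemma lin_mapZ (g : U -> W) : lin_map g -> forall c u, g (c *: u) = c *: g u.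
Proof. by move=> gL c u; have := gL c u 0; rewrite !addr0 (lin_map0 gL) addr0. Qed.

Definition affine_on_lines (h : U -> R) :=
  forall u v, affine_fun (fun t => h (u + t *: v)).

Lemma affine_on_lines_lin_form (h : U -> R) :
  affine_on_lines h -> lin_form (fun u => h u - h 0).
Proof.
move=> hA.
have hE u v t : h (u + t *: v) = h u + t * (h (u + v) - h u).
  by rewrite (affine_funE (hA u v)) /= scale0r addr0 scale1r.
have hZ v t : h (t *: v) = h 0 + t * (h v - h 0) by have := hE 0 v t; rewrite !add0r.
have hD u v : h (u + v) = h u + h v - h 0.
  have midE : u + 2^-1 *: (v - u) = 2^-1 *: (u + v).
    apply: (@scalerI _ _ 2); first by rewrite pnatr_eq0.
    rewrite scalerDr !scalerA mulfV ?pnatr_eq0 // !scale1r scalerDl scale1r.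
    by rewrite -addrA [u + (v - u)]addrC subrK.
  have := hE u (v - u) 2^-1; rewrite midE hZ [u + (v - u)]addrC subrK; lra.
by move=> c u v /=; rewrite hD hZ; ring.
Qed.

End LinearMaps.

Lemma affine_map_pair (R : realType) (U V : vectType R) (k : R)
    (l1 : U -> R) (l2 : V -> R) :
  lin_form l1 -> lin_form l2 -> affine_map (fun p : U * V => k + (l1 p.1 + l2 p.2)).
Proof.
move=> l1L l2L; exists k, (fun p => l1 p.1 + l2 p.2); split=> // c [u v] [u' v'] /=.
by rewrite l1L l2L; ring.
Qed.

Section HorizontallyAndVerticallyAffine.
Variable R : realType.
Variables V1 V2 : vectType R.
Variable br : V1 -> V1 -> V2.
Hypothesis br_linr : forall x, lin_map (br x).
Hypothesis br_linl : forall x', lin_map (fun x => br x x').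
Hypothesis br_skew : forall x x', br x x' = - br x' x.
Variable f : V1 * V2 -> R.
Hypothesis f_h_affine : h_affine br f.
Hypothesis f_V2_affine : V2_affine f.

Lemma cmul_horizontal x z y t :
  cmul br (x, z) (t *: y, 0) = (x + t *: y, z + t *: br x y).
Proof. by rewrite /cmul /= addr0 (lin_mapZ (br_linr x)). Qed.

Definition hpart x := f (x, 0).
Definition vpart x z := f (x, z) - f (x, 0).
Definition vlin z := vpart 0 z.
Definition vbil x z := vpart x z - vpart 0 z.

Lemma vpart_lin x : lin_form (vpart x).
Proof. exact: (affine_on_lines_lin_form (f_V2_affine x)). Qed.

Lemma vpart_affine_on_lines z : affine_on_lines (fun x => vpart x z).
Proof.
move=> x y; apply: eq_affine_fun (affine_funB (f_h_affine (x, z) y) (f_h_affine (x, 0) y)).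
move=> t /=; rewrite !cmul_horizontal add0r.
by have := lin_formD (vpart_lin (x + t *: y)) z (t *: br x y); rewrite /vpart; lra.
Qed.

Lemma vlin_lin : lin_form vlin.
Proof. exact: vpart_lin. Qed.

Lemma vbil_bilin : bilin_form vbil.
Proof.
split=> [x|z]; first exact: lin_formB (vpart_lin x) (vpart_lin 0).
exact: affine_on_lines_lin_form (vpart_affine_on_lines z).
Qed.

Lemma f_decomp x z : f (x, z) = hpart x + vlin z + vbil x z.
Proof. by rewrite /hpart /vlin /vbil /vpart; ring. Qed.

Lemma f_horizontal_line x y t :
  f (cmul br (x, 0) (t *: y, 0)) = hpart (x + t *: y) + t * vlin (br x y)
    + t * vbil x (br x y) + t ^+ 2 * vbil y (br x y).
Proof.
have [vbil_z vbil_x] := vbil_bilin.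
rewrite cmul_horizontal add0r f_decomp (lin_formZ vlin_lin) (lin_formZ (vbil_z _)).
by rewrite (lin_formD (vbil_x _)) (lin_formZ (vbil_x _)); ring.
Qed.

Lemma hpart_second_difference x y :
  hpart x - 2 * hpart (x + y) + hpart (x + 2 *: y) = - 2 * vbil y (br x y).
Proof.
have := affine_fun_second_difference (f_h_affine (x, 0) y).
rewrite /= !f_horizontal_line scale0r addr0 scale1r expr2; lra.
Qed.

Lemma hpart_radial y t : hpart (t *: y) = hpart 0 + t * (hpart y - hpart 0).
Proof.
have := affine_funE (f_h_affine (0, 0) y) t.
by rewrite /= !cmul_horizontal !add0r scale0r scale1r (lin_map0 (br_linl y)) !scaler0.
Qed.

Lemma vbil_bracketr x y : vbil y (br x y) = 0.
Proof.
have [vbil_z vbil_x] := vbil_bilin.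
have two_neq0 : (2 : R) != 0 by rewrite pnatr_eq0.
have near : x = 2^-1 *: (2 *: x) by rewrite scalerA mulVf // scale1r.
have mid : x + 2^-1 *: y = 2^-1 *: (2 *: x + y).
  by rewrite scalerDr scalerA mulVf // scale1r.
have far : x + 2 *: (2^-1 *: y) = 2^-1 *: (2 *: x + 2 *: y).
  by rewrite scalerDr !scalerA mulVf // mulfV // !scale1r.
have coarse := hpart_second_difference (2 *: x) y.
have fine := hpart_second_difference x (2^-1 *: y).
(* By radial affinity the left side of [fine] is half that of [coarse], while
   the right sides are [-q/2] and [-4 q] for [q := vbil y (br x y)]. *)
rewrite far mid {1}near !hpart_radial in fine.
rewrite (lin_mapZ (br_linr x)) (lin_formZ (vbil_z _)) (lin_formZ (vbil_x _)) in fine.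
rewrite (lin_mapZ (br_linl y)) (lin_formZ (vbil_z _)) in coarse.
by move: coarse fine; rewrite (hpart_radial x 2); lra.
Qed.

Lemma vbil_bracketl x y : vbil x (br x y) = 0.
Proof.
have := vbil_bracketr y x; rewrite br_skew (lin_formN (vbil_bilin.1 _)).
by move/eqP; rewrite oppr_eq0 => /eqP.
Qed.

Lemma hpart_lin : lin_form (fun x => hpart x - hpart 0).
Proof.
apply: affine_on_lines_lin_form => x y.
apply: eq_affine_fun (affine_fun_sub_linear (vlin (br x y)) (f_h_affine (x, 0) y)) => t /=.
by rewrite f_horizontal_line vbil_bracketl vbil_bracketr; ring.
Qed.

End HorizontallyAndVerticallyAffine.

Theorem proposition3p4 (R : realType) (V1 V2 : vectType R)
  (br : V1 -> V1 -> V2) (Hbr : carnot_bracket br)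
  (f : V1 * V2 -> R) (Hf : h_affine br f) (HfV2 : V2_affine f) :
  exists (a : V1 * V2 -> R) (b : V1 -> V2 -> R),
    [/\ affine_map a, bilin_form b,
        (forall x x' : V1, b x (br x x') = 0)
      & forall (x : V1) (z : V2), f (x, z) = a (x, z) + b x z].
Proof.
have [br_linr br_linl br_skew _ _] := Hbr.
exists (fun p => hpart f 0 + ((hpart f p.1 - hpart f 0) + vlin f p.2)), (vbil f).
split.
- have hpart_lin_f := hpart_lin br_linr br_linl br_skew Hf HfV2.
  exact: (affine_map_pair (hpart f 0) hpart_lin_f (vlin_lin HfV2)).
- exact: (vbil_bilin br_linr Hf HfV2).
- exact: (vbil_bracketl br_linr br_linl br_skew Hf HfV2).
- by move=> x z; rewrite f_decomp /=; ring.
Qed.
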